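(* For every finite $d\in\mathbb N$, the infimum of $\int_{\mathcal Q} v(q)\,dq$ over all $v\in\mathbb R[q]_d$ satisfying $v(q)-x\ge0$ for all $(q,x,y)\in\mathcal Z$ is attained.
   Context: Let $n\ge1$, $\mathcal Q=[-1,1]^n$, $dq$ Lebesgue measure, and $\mathbb R[q]_d$ the real polynomials in $q=(q_1,\dots,q_n)$ of degree at most $d$. Let $m\ge1$ and $p(q,s)=\sum_{k=0}^m p_k(q)s^k$ with $p_k\in\mathbb R[q]$, $p_m\equiv1$, $s\in\mathbb C$. Writing $s=x+iy$, define $p_\Re,p_\Im\in\mathbb R[q,x,y]$ by $p(q,x+iy)=p_\Re(q,x,y)+i\,p_\Im(q,x,y)$, and $\mathcal Z=\{(q,x,y): q\in\mathcal Q,\ p_\Re(q,x,y)=p_\Im(q,x,y)=0\}$. *)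

From Stdlib Require Import Reals List.
Open Scope R_scope.

(* Points q of R^n are lists of reals of length n. *)
Definition in_cube (n : nat) (q : list R) : Prop :=
  length q = n /\ Forall (fun t => -1 <= t <= 1) q.

Fixpoint mono_eval (q : list R) (a : list nat) : R :=
  match q, a with
  | t :: q', e :: a' => t ^ e * mono_eval q' a'
  | _, _ => 1
  end.

Definition list_sumn (a : list nat) : nat := fold_right Nat.add 0%nat a.

(* Evaluation of a polynomial given as a list of (coefficient, exponent) pairs. *)
Definition poly_eval (P : list (R * list nat)) (q : list R) : R :=
  fold_right (fun c acc => fst c * mono_eval q (snd c) + acc) 0 P.

Definition is_poly_deg (n d : nat) (f : list R -> R) : Prop :=
  exists P : list (R * list nat),
    Forall (fun c => length (snd c) = n /\ (list_sumn (snd c) <= d)%nat) P /\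
    forall q, length q = n -> f q = poly_eval P q.

Definition is_poly (n : nat) (f : list R -> R) : Prop :=
  exists d, is_poly_deg n d f.

(* Complex arithmetic on pairs (re, im). *)
Definition cmul (z w : R * R) : R * R :=
  (fst z * fst w - snd z * snd w, fst z * snd w + snd z * fst w).

Fixpoint cpow (z : R * R) (k : nat) : R * R :=
  match k with
  | O => (1, 0)
  | S k' => cmul z (cpow z k')
  end.

(* p(q, x+iy) = sum_{k=0}^m p_k(q) (x+iy)^k, as a pair (p_Re, p_Im). *)
Fixpoint psum (pk : nat -> list R -> R) (q : list R) (z : R * R) (k : nat) : R * R :=
  match k with
  | O => (pk O q * fst (cpow z O), pk O q * snd (cpow z O))
  | S k' => (fst (psum pk q z k') + pk k q * fst (cpow z k),
             snd (psum pk q z k') + pk k q * snd (cpow z k))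
  end.

Definition p_Re (m : nat) (pk : nat -> list R -> R) (q : list R) (x y : R) : R :=
  fst (psum pk q (x, y) m).
Definition p_Im (m : nat) (pk : nat -> list R -> R) (q : list R) (x y : R) : R :=
  snd (psum pk q (x, y) m).

Definition inZ (n m : nat) (pk : nat -> list R -> R) (q : list R) (x y : R) : Prop :=
  in_cube n q /\ p_Re m pk q x y = 0 /\ p_Im m pk q x y = 0.

Definition feasible (n m : nat) (pk : nat -> list R -> R) (d : nat) (v : list R -> R) : Prop :=
  is_poly_deg n d v /\
  forall q x y, inZ n m pk q x y -> v q - x >= 0.

(* BoxInt n f I : I is the integral of f over [-1,1]^n, computed as the
   iterated Riemann integral over the coordinates (Fubini). *)
Fixpoint BoxInt (n : nat) (f : list R -> R) (I : R) : Prop :=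
  match n with
  | O => I = f nil
  | S n' => exists g : R -> R,
      (forall t, BoxInt n' (fun l => f (t :: l)) (g t)) /\
      exists pr : Riemann_integrable g (-1) 1, RiemannInt pr = I
  end.

(* A feasible [v] must dominate the real part of some root of [p(q, .)] at every [q] of
   the cube (such roots exist by the fundamental theorem of algebra), and these real parts
   are bounded by Cauchy's bound, so [v >= -B] on the cube for a constant [B].  Writing [v]
   in the monomial basis of R[q]_d, the integral is a linear functional that is coercive on
   the cone of polynomials nonnegative on the cube: it is positive on the compact set of
   nonnegative unit vectors, because a nonzero polynomial is nonzero on an open piece of the
   cube.  Hence the sublevel sets of the integral over the closed feasible set are compact,
   and the integral attains its minimum there. *)

From Stdlib Require Import Reals List Lra Lia Psatz FunctionalExtensionality ClassicalEpsilon.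
Open Scope R_scope.

(** * Iterated integrals over the cube *)

Lemma BoxInt_ext n f g I : (forall q, f q = g q) -> BoxInt n f I -> BoxInt n g I.
Proof. intros H; replace g with f; auto. apply functional_extensionality; auto. Qed.

Lemma BoxInt_unique n : forall f g I J, (forall q, length q = n -> f q = g q) ->
  BoxInt n f I -> BoxInt n g J -> I = J.
Proof.
induction n as [|n IH]; simpl; intros f g I J Hfg Hf Hg.
- subst. now apply Hfg.
- destruct Hf as [g1 [Hg1 [pr1 <-]]], Hg as [g2 [Hg2 [pr2 <-]]].
  assert (g1 = g2) as <-.
  { apply functional_extensionality; intro t.
    apply (IH (fun l => f (t :: l)) (fun l => g (t :: l))); auto.
    intros q Hq; apply Hfg; simpl; auto. }
  apply RiemannInt_P5.
Qed.

Lemma BoxInt_const n c : BoxInt n (fun _ => c) (c * 2 ^ n).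
Proof.
induction n as [|n IH]; simpl.
- ring.
- exists (fun _ => c * 2 ^ n). split; [intros _; exact IH|].
  exists (RiemannInt_P14 (-1) 1 (c * 2 ^ n)).
  etransitivity; [apply RiemannInt_P15|]. ring.
Qed.

Lemma BoxInt_plus_scal n : forall f g I J l, BoxInt n f I -> BoxInt n g J ->
  BoxInt n (fun q => f q + l * g q) (I + l * J).
Proof.
induction n as [|n IH]; simpl; intros f g I J l Hf Hg.
- now subst.
- destruct Hf as [g1 [Hg1 [pr1 <-]]], Hg as [g2 [Hg2 [pr2 <-]]].
  exists (fun t => g1 t + l * g2 t). split; [intro t; apply IH; auto|].
  exists (RiemannInt_P10 l pr1 pr2). apply RiemannInt_P13.
Qed.

Lemma BoxInt_scal n f I l : BoxInt n f I -> BoxInt n (fun q => l * f q) (l * I).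
Proof.
intros Hf. replace (l * I) with (0 * 2 ^ n + l * I) by ring.
eapply BoxInt_ext; [|exact (BoxInt_plus_scal n _ _ _ _ l (BoxInt_const n 0) Hf)].
intro q; simpl; ring.
Qed.

Lemma RiemannInt_ge_const g a b c (pr : Riemann_integrable g a b) : a <= b ->
  (forall t, a < t < b -> c <= g t) -> c * (b - a) <= RiemannInt pr.
Proof.
intros Hab H. rewrite <- (RiemannInt_P15 (RiemannInt_P14 a b c)).
apply RiemannInt_P19; auto.
Qed.

Lemma BoxInt_ge0 n : forall f I, BoxInt n f I ->
  (forall q, in_cube n q -> 0 <= f q) -> 0 <= I.
Proof.
induction n as [|n IH]; simpl; intros f I Hf Hpos.
- subst. apply Hpos. split; auto.
- destruct Hf as [g [Hg [pr <-]]].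
  replace 0 with (0 * (1 - -1)) by ring. apply RiemannInt_ge_const; [lra|].
  intros t Ht. apply (IH (fun l => f (t :: l))); auto.
  intros q [Hl Hq]. apply Hpos. split; simpl; auto. constructor; auto; lra.
Qed.

Definition box_volume (B : list (R * R)) : R :=
  fold_right (fun ab acc => (snd ab - fst ab) * acc) 1 B.

Definition in_box (B : list (R * R)) (q : list R) : Prop :=
  Forall2 (fun ab t => fst ab <= t <= snd ab) B q.

Definition subbox_of_cube (B : list (R * R)) : Prop :=
  Forall (fun ab => -1 <= fst ab /\ fst ab < snd ab /\ snd ab <= 1) B.

Lemma box_volume_gt0 B : subbox_of_cube B -> 0 < box_volume B.
Proof.
induction 1 as [|ab B Hab _ IH]; simpl; [lra|].
apply Rmult_lt_0_compat; [lra|auto].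
Qed.

Lemma BoxInt_ge_on_subbox n : forall f I B eps, length B = n -> subbox_of_cube B ->
  BoxInt n f I -> (forall q, in_cube n q -> 0 <= f q) ->
  (forall q, in_cube n q -> in_box B q -> eps <= f q) ->
  eps * box_volume B <= I.
Proof.
induction n as [|n IH]; simpl; intros f I B eps HB HBc Hf Hpos Heps.
- destruct B; [|discriminate]. simpl. subst. rewrite Rmult_1_r.
  apply Heps; [split; auto|constructor].
- destruct B as [|[a b] B']; [discriminate|]. simpl in *. injection HB as HB.
  inversion HBc as [|? ? Hab HB']; subst; simpl in Hab.
  destruct Hf as [g [Hg [pr <-]]].
  assert (Hg0 : forall t, -1 <= t <= 1 -> 0 <= g t).
  { intros t Ht. apply (BoxInt_ge0 (length B') (fun l => f (t :: l))); auto.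
    intros q [Hl Hq]. apply Hpos. split; simpl; auto. }
  assert (Hg1 : forall t, a <= t <= b -> eps * box_volume B' <= g t).
  { intros t Ht. apply (IH (fun l => f (t :: l))); auto.
    - intros q [Hl Hq]. apply Hpos. split; simpl; auto. constructor; auto; lra.
    - intros q [Hl Hq] Hbox. apply Heps; [split; simpl; auto|constructor; auto].
      constructor; auto; lra. }
  assert (Ha : -1 <= a <= 1) by lra. assert (Hb : a <= b <= 1) by lra.
  pose (pr1 := RiemannInt_P22 pr Ha). pose (pr23 := RiemannInt_P23 pr Ha).
  pose (pr2 := RiemannInt_P22 pr23 Hb). pose (pr3 := RiemannInt_P23 pr23 Hb).
  rewrite <- (RiemannInt_P26 pr1 pr23 pr), <- (RiemannInt_P26 pr2 pr3 pr23).
  assert (0 <= RiemannInt pr1).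
  { replace 0 with (0 * (a - -1)) by ring. apply RiemannInt_ge_const; [lra|].
    intros; apply Hg0; lra. }
  assert (0 <= RiemannInt pr3).
  { replace 0 with (0 * (1 - b)) by ring. apply RiemannInt_ge_const; [lra|].
    intros; apply Hg0; lra. }
  assert (eps * box_volume B' * (b - a) <= RiemannInt pr2).
  { apply RiemannInt_ge_const; [lra|]. intros; apply Hg1; lra. }
  nra.
Qed.

(** * Polynomials on the cube *)

Lemma mono_eval_nil q : mono_eval q nil = 1.
Proof. destruct q; reflexivity. Qed.

Lemma pow_abs_le1 t e : Rabs t <= 1 -> Rabs (t ^ e) <= 1.
Proof.
intros Ht. rewrite <- RPow_abs, <- (pow1 e). apply pow_incr.
split; [apply Rabs_pos|exact Ht].
Qed.

Lemma pow_lipschitz t s e : Rabs t <= 1 -> Rabs s <= 1 ->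
  Rabs (t ^ e - s ^ e) <= INR e * Rabs (t - s).
Proof.
intros Ht Hs; induction e as [|e IH].
- simpl. replace (1 - 1) with 0 by ring. rewrite Rabs_R0; lra.
- rewrite S_INR. simpl pow.
  replace (t * t ^ e - s * s ^ e) with (t * (t ^ e - s ^ e) + (t - s) * s ^ e) by ring.
  eapply Rle_trans; [apply Rabs_triang|]. rewrite !Rabs_mult.
  pose proof (pow_abs_le1 s e Hs). pose proof (Rabs_pos (t ^ e - s ^ e)).
  pose proof (Rabs_pos (t - s)). pose proof (Rabs_pos t). pose proof (Rabs_pos (s ^ e)).
  pose proof (pos_INR e). nra.
Qed.

Definition in_unit_ball (t : R) : Prop := -1 <= t <= 1.

Lemma mono_eval_abs_le1 q a : Forall in_unit_ball q -> Rabs (mono_eval q a) <= 1.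
Proof.
intros Hq; revert a; induction Hq as [|t q Ht Hq IH]; intros [|e a']; simpl;
  try (rewrite Rabs_R1; lra).
rewrite Rabs_mult.
assert (Rabs (t ^ e) <= 1) by (apply pow_abs_le1, Rabs_le, Ht).
pose proof (IH a'). pose proof (Rabs_pos (t ^ e)). pose proof (Rabs_pos (mono_eval q a')). nra.
Qed.

Definition cube_close (del : R) (q q0 : list R) : Prop :=
  Forall2 (fun t s => in_unit_ball t /\ in_unit_ball s /\ Rabs (t - s) <= del) q q0.

Lemma mono_eval_lipschitz del a q q0 : 0 <= del -> cube_close del q q0 ->
  Rabs (mono_eval q a - mono_eval q0 a) <= INR (list_sumn a) * del.
Proof.
intros Hdel Hclose; revert q q0 Hclose; induction a as [|e a IH]; intros q q0 Hclose.
- rewrite !mono_eval_nil. replace (1 - 1) with 0 by ring. rewrite Rabs_R0. simpl; lra.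
- destruct Hclose as [|t s q q0 [Ht [Hs Hts]] Hclose]; simpl.
  + replace (1 - 1) with 0 by ring. rewrite Rabs_R0.
    apply Rmult_le_pos; [apply pos_INR|exact Hdel].
  + change (list_sumn (e :: a)) with (e + list_sumn a)%nat. rewrite plus_INR.
    replace (t ^ e * mono_eval q a - s ^ e * mono_eval q0 a) with
      ((t ^ e - s ^ e) * mono_eval q a + s ^ e * (mono_eval q a - mono_eval q0 a)) by ring.
    eapply Rle_trans; [apply Rabs_triang|]. rewrite !Rabs_mult.
    assert (Hq : Forall in_unit_ball q) by (clear IH; induction Hclose; constructor; tauto).
    pose proof (mono_eval_abs_le1 q a Hq).
    pose proof (pow_abs_le1 s e (Rabs_le _ _ Hs)).
    pose proof (pow_lipschitz t s e (Rabs_le _ _ Ht) (Rabs_le _ _ Hs)).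
    pose proof (IH q q0 Hclose).
    pose proof (Rabs_pos (t ^ e - s ^ e)). pose proof (Rabs_pos (mono_eval q a)).
    pose proof (Rabs_pos (s ^ e)). pose proof (Rabs_pos (mono_eval q a - mono_eval q0 a)).
    pose proof (pos_INR e). nra.
Qed.

Definition coef_abs_sum (P : list (R * list nat)) : R :=
  fold_right (fun c acc => Rabs (fst c) + acc) 0 P.

Definition lipschitz_const (P : list (R * list nat)) : R :=
  fold_right (fun c acc => Rabs (fst c) * INR (list_sumn (snd c)) + acc) 0 P.

Lemma lipschitz_const_ge0 P : 0 <= lipschitz_const P.
Proof.
induction P as [|c P IH]; simpl; [lra|].
pose proof (Rabs_pos (fst c)). pose proof (pos_INR (list_sumn (snd c))). nra.
Qed.

Lemma poly_eval_cons c P q :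
  poly_eval (c :: P) q = fst c * mono_eval q (snd c) + poly_eval P q.
Proof. reflexivity. Qed.

Lemma poly_eval_abs_le P q : Forall in_unit_ball q -> Rabs (poly_eval P q) <= coef_abs_sum P.
Proof.
intros Hq; induction P as [|c P IH]; [simpl; rewrite Rabs_R0; lra|].
change (coef_abs_sum (c :: P)) with (Rabs (fst c) + coef_abs_sum P).
rewrite poly_eval_cons. eapply Rle_trans; [apply Rabs_triang|]. rewrite Rabs_mult.
pose proof (mono_eval_abs_le1 q (snd c) Hq). pose proof (Rabs_pos (fst c)). nra.
Qed.

Lemma poly_eval_lipschitz del P q q0 : 0 <= del -> cube_close del q q0 ->
  Rabs (poly_eval P q - poly_eval P q0) <= lipschitz_const P * del.
Proof.
intros Hdel Hclose; induction P as [|c P IH].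
- simpl. replace (0 - 0) with 0 by ring. rewrite Rabs_R0; lra.
- change (lipschitz_const (c :: P))
    with (Rabs (fst c) * INR (list_sumn (snd c)) + lipschitz_const P).
  rewrite !poly_eval_cons.
  replace (fst c * mono_eval q (snd c) + poly_eval P q -
           (fst c * mono_eval q0 (snd c) + poly_eval P q0))
    with (fst c * (mono_eval q (snd c) - mono_eval q0 (snd c)) +
          (poly_eval P q - poly_eval P q0)) by ring.
  eapply Rle_trans; [apply Rabs_triang|]. rewrite Rabs_mult.
  pose proof (mono_eval_lipschitz del (snd c) q q0 Hdel Hclose).
  pose proof (Rabs_pos (fst c)). nra.
Qed.

Definition box_around (del : R) (q0 : list R) : list (R * R) :=
  map (fun t => (Rmax (-1) (t - del), Rmin 1 (t + del))) q0.

Lemma box_around_subbox del q0 : 0 < del -> Forall in_unit_ball q0 ->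
  subbox_of_cube (box_around del q0).
Proof.
intros Hdel; induction 1 as [|t q0 Ht _ IH]; constructor; auto; simpl.
unfold in_unit_ball, Rmax, Rmin in *.
destruct (Rle_dec (-1) (t - del)); destruct (Rle_dec 1 (t + del)); lra.
Qed.

Lemma in_box_around del q0 q : Forall in_unit_ball q0 -> Forall in_unit_ball q ->
  in_box (box_around del q0) q -> cube_close del q q0.
Proof.
intros Hq0; revert q; induction Hq0 as [|s q0 Hs _ IH]; intros q Hq Hbox;
  inversion Hbox as [|ab t B q' Hts Hbox']; subst; constructor.
- inversion Hq; subst. split; [auto|split; [auto|]]. apply Rabs_le. simpl in Hts.
  unfold in_unit_ball, Rmax, Rmin in *.
  destruct (Rle_dec (-1) (s - del)); destruct (Rle_dec 1 (s + del)); lra.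
- inversion Hq; subst. apply IH; auto.
Qed.

Lemma mono_integral_ex n a : exists I, BoxInt n (fun q => mono_eval q a) I.
Proof.
revert a; induction n as [|n IH]; intros a.
- exists (mono_eval nil a). reflexivity.
- destruct a as [|e a'].
  + exists (1 * 2 ^ S n). eapply BoxInt_ext; [|apply BoxInt_const].
    intro q; rewrite mono_eval_nil; reflexivity.
  + destruct (IH a') as [I HI].
    assert (pr : Riemann_integrable (fun t => t ^ e * I) (-1) 1).
    { apply continuity_implies_RiemannInt; [lra|]. intros x _.
      apply continuity_pt_mult; [apply derivable_continuous_pt, derivable_pt_pow|].
      apply continuity_pt_const. intros u v; reflexivity. }
    exists (RiemannInt pr), (fun t => t ^ e * I). split.
    * intro t. exact (BoxInt_scal n _ _ (t ^ e) HI).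
    * exists pr; reflexivity.
Qed.

Definition mono_integral n a : R :=
  proj1_sig (constructive_indefinite_description _ (mono_integral_ex n a)).

Lemma BoxInt_mono_integral n a : BoxInt n (fun q => mono_eval q a) (mono_integral n a).
Proof. unfold mono_integral. destruct (constructive_indefinite_description _ _); auto. Qed.

Definition poly_integral n (P : list (R * list nat)) : R :=
  fold_right (fun c acc => fst c * mono_integral n (snd c) + acc) 0 P.

Lemma BoxInt_poly_integral n P : BoxInt n (poly_eval P) (poly_integral n P).
Proof.
induction P as [|c P IH]; simpl.
- replace 0 with (0 * 2 ^ n) by ring.
  eapply BoxInt_ext; [|apply BoxInt_const]. reflexivity.
- pose proof (BoxInt_plus_scal n _ _ _ _ (fst c) IH (BoxInt_mono_integral n (snd c))) as H.
  rewrite Rplus_comm. eapply BoxInt_ext; [|exact H].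
  intro q; rewrite poly_eval_cons; ring.
Qed.

(* Lipschitz continuity keeps [P] above [P(q0)/2] on a box of positive volume around [q0]. *)
Lemma poly_integral_gt0 n P q0 : in_cube n q0 ->
  (forall q, in_cube n q -> 0 <= poly_eval P q) -> 0 < poly_eval P q0 ->
  0 < poly_integral n P.
Proof.
intros [Hl0 Hq0] Hpos Hv0.
pose proof (lipschitz_const_ge0 P) as HL.
set (v0 := poly_eval P q0) in *. set (L := lipschitz_const P) in *.
set (del := v0 / (2 * (L + 1))).
assert (Hdel : 0 < del) by (apply Rdiv_lt_0_compat; lra).
assert (HLdel : L * del <= v0 / 2).
{ apply Rmult_le_reg_r with (2 * (L + 1)); [lra|].
  replace (L * del * (2 * (L + 1))) with (L * v0) by (unfold del; field; lra).
  nra. }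
assert (Hbox := box_around_subbox del q0 Hdel Hq0).
assert (Hvol := box_volume_gt0 _ Hbox).
assert (v0 / 2 * box_volume (box_around del q0) <= poly_integral n P).
{ apply (BoxInt_ge_on_subbox n (poly_eval P)); auto.
  - unfold box_around; rewrite length_map; auto.
  - apply BoxInt_poly_integral.
  - intros q [Hl Hq] Hin.
    pose proof (poly_eval_lipschitz del P q q0 (Rlt_le _ _ Hdel)
                  (in_box_around del q0 q Hq0 Hq Hin)) as Hlip.
    rewrite Rabs_minus_sym in Hlip.
    pose proof (Rle_abs (poly_eval P q0 - poly_eval P q)). unfold v0, L in *. lra. }
nra.
Qed.

Lemma is_poly_bounded_on_cube n f : is_poly n f ->
  exists M, forall q, in_cube n q -> Rabs (f q) <= M.
Proof.
intros [d [P [_ Hf]]]. exists (coef_abs_sum P). intros q [Hl Hq].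
rewrite Hf; auto. apply poly_eval_abs_le; auto.
Qed.

Lemma uniformly_bounded_on_cube n (F : nat -> list R -> R) m :
  (forall k, (k <= m)%nat -> exists M, forall q, in_cube n q -> Rabs (F k q) <= M) ->
  exists M, forall k q, (k <= m)%nat -> in_cube n q -> Rabs (F k q) <= M.
Proof.
induction m as [|m IH]; intros H.
- destruct (H 0%nat (le_n 0)) as [M HM]. exists M. intros k q Hk Hq.
  replace k with 0%nat by lia. auto.
- destruct IH as [M1 H1]; [intros k Hk; apply H; lia|].
  destruct (H (S m) (le_n _)) as [M2 H2]. exists (Rmax M1 M2). intros k q Hk Hq.
  destruct (Nat.eq_dec k (S m)) as [->|Hne].
  + eapply Rle_trans; [apply H2; auto|apply Rmax_r].
  + eapply Rle_trans; [apply H1; auto; lia|apply Rmax_l].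
Qed.

Lemma in_cube_cons n t l : 0 < t <= 1 -> in_cube n l -> in_cube (S n) (t :: l).
Proof. intros Ht [Hl Hq]. split; [simpl; auto|constructor; auto; lra]. Qed.

Lemma is_poly_deg_const n d B : is_poly_deg n d (fun _ => B).
Proof.
exists ((B, repeat 0%nat n) :: nil). split.
- constructor; [|constructor]. simpl. split; [apply repeat_length|].
  induction n as [|n IH]; simpl; lia.
- intros q _. unfold poly_eval; simpl.
  replace (mono_eval q (repeat 0%nat n)) with 1; [ring|].
  revert q; induction n as [|n IH]; intros [|t q]; simpl; auto. rewrite <- IH; ring.
Qed.

From HB Require Import structures.
From mathcomp Require Import all_boot all_order all_algebra.
From mathcomp Require Import complex Rstruct Rstruct_topology.
From mathcomp Require Import all_classical all_reals topology normedtype derive.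
From mathcomp Require Import ring lra.
Set Implicit Arguments. Unset Strict Implicit. Unset Printing Implicit Defensive.
Import Order.TTheory GRing.Theory Num.Theory.
Import numFieldNormedType.Exports.
Local Open Scope ring_scope.

(** * Polynomials vanishing on the cube *)

Fixpoint exponents (n d : nat) : seq (seq nat) :=
  if n is n'.+1 then [seq k :: a | k <- iota 0 d.+1, a <- exponents n' (d - k)]
  else [:: [::]].

Lemma exponentsP n d a : reflect (size a = n /\ (sumn a <= d)%N) (a \in exponents n d).
Proof.
elim: n d a => [|n IH] d a.
  by rewrite inE; apply: (iffP eqP) => [->|[/size0nil]].
apply: (iffP allpairsPdep) => [[k [a' [Hk /IH [<- Ha] ->]]]|].
  rewrite mem_iota add0n ltnS in Hk.
  by split=> //=; rewrite -(subnKC Hk) leq_add2l.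
case: a => [[]|k a [[Hs] Hsum]] //.
have Hk : (k <= d)%N := leq_trans (leq_addr _ _) Hsum.
exists k, a; split=> //; first by rewrite mem_iota add0n ltnS.
by apply/IH; split=> //; rewrite leq_subRL.
Qed.

Lemma exponents_uniq n d : uniq (exponents n d).
Proof.
elim: n d => [|n IH] d //.
apply: allpairs_uniq_dep => [||[k1 a1] [k2 a2] _ _ /= [e1 e2]]; rewrite ?iota_uniq //.
by subst.
Qed.

Lemma poly_eq0_on_unit_interval (F : numFieldType) (p : {poly F}) :
  (forall t, 0 < t <= 1 -> p.[t] = 0) -> p = 0.
Proof.
move=> Hp; apply: (@roots_geq_poly_eq0 _ p [seq i.+1%:R^-1 | i <- iota 0 (size p)]).
- apply/allP => _ /mapP[i _ ->]; apply/rootP/Hp.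
  by rewrite invr_gt0 ltr0Sn invf_le1 ?ltr0Sn // ler1n.
- by rewrite map_inj_uniq ?iota_uniq // => i j /invr_inj/eqP; rewrite eqr_nat eqSS => /eqP.
- by rewrite size_map size_iota.
Qed.

Definition coef_eval n d (c : seq nat -> R) (q : list R) : R :=
  \sum_(a <- exponents n d) c a * mono_eval q a.

Lemma coef_eval_cons n d c t l :
  coef_eval n.+1 d c (t :: l) =
  (\poly_(k < d.+1) coef_eval n (d - k) (fun a => c (k :: a)) l).[t].
Proof.
rewrite horner_poly /coef_eval big_allpairs_dep.
have -> : iota 0 d.+1 = index_iota 0 d.+1 by rewrite /index_iota subn0.
rewrite big_mkord.
apply: eq_bigr => k _; rewrite mulr_suml; apply: eq_bigr => a _.
by rewrite /= RmultE RpowE mulrCA mulrC.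
Qed.

Lemma coef_eval_eq0 n d (c : seq nat -> R) :
  (forall q, in_cube n q -> coef_eval n d c q = 0) -> {in exponents n d, forall a, c a = 0}.
Proof.
elim: n d c => [|n IH] d c Hc a.
  rewrite inE => /eqP ->; have := Hc nil (conj erefl (Forall_nil _)).
  by rewrite /coef_eval big_seq1 /= mulr1.
case/allpairsPdep => k [a' [Hk Ha' ->]].
apply: (IH (d - k)%N (fun a => c (k :: a))) Ha' => l Hl.
have Hpoly : \poly_(j < d.+1) coef_eval n (d - j) (fun a => c (j :: a)) l = 0.
  apply: poly_eq0_on_unit_interval => t /andP[/RltP t0 /RleP t1].
  by rewrite -coef_eval_cons Hc //; apply: in_cube_cons.
move: Hk; rewrite mem_iota add0n => /andP[_ Hk].
by have := congr1 (fun p : {poly R} => p`_k) Hpoly; rewrite coef_poly coef0 Hk.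
Qed.

(** * Coefficient vectors *)

Lemma In_mem (T : eqType) (x : T) (s : seq T) : In x s <-> x \in s.
Proof.
elim: s => [|y s IH] //=; rewrite in_cons; split.
- by case=> [->|/IH ->]; rewrite ?eqxx ?orbT.
- by case/orP => [/eqP ->|/IH]; [left|right].
Qed.

Section CoordSum.
Variables (K : realType) (N : nat).

Definition coord_sum (a : 'I_N -> K) (c : 'rV[K]_N) : K := \sum_(i < N) c ord0 i * a i.

Lemma coord_sumD a c1 c2 : coord_sum a (c1 + c2) = coord_sum a c1 + coord_sum a c2.
Proof. by rewrite /coord_sum -big_split; apply: eq_bigr => i _; rewrite mxE mulrDl. Qed.

Lemma coord_sumZ a k c : coord_sum a (k *: c) = k * coord_sum a c.
Proof. by rewrite /coord_sum mulr_sumr; apply: eq_bigr => i _; rewrite mxE mulrA. Qed.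

Lemma coord_sum0 a : coord_sum a 0 = 0.
Proof. by rewrite /coord_sum big1 // => i _; rewrite mxE mul0r. Qed.

Lemma coord_sum_continuous a : continuous (coord_sum a).
Proof.
apply: continuous_big => [|i _]; first exact: add_continuous.
by move=> c; apply: continuousM; [exact: coord_continuous | exact: cst_continuous].
Qed.

End CoordSum.

Lemma poly_eval_map (I : Type) (f : I -> R * list nat) (s : seq I) q :
  poly_eval [seq f i | i <- s] q = \sum_(i <- s) (f i).1 * mono_eval q (f i).2.
Proof. by elim: s => [|i s IH]; rewrite ?big_nil ?big_cons //= -IH. Qed.

Lemma poly_integral_map (I : Type) n (f : I -> R * list nat) (s : seq I) :
  poly_integral n [seq f i | i <- s] = \sum_(i <- s) (f i).1 * mono_integral n (f i).2.
Proof. by elim: s => [|i s IH]; rewrite ?big_nil ?big_cons //= -IH. Qed.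

Section CoefficientSpace.
Variables n d : nat.

Local Notation N := (size (exponents n d)).
Local Notation expo i := (nth [::] (exponents n d) i).

Definition coefs_eval (c : 'rV[R]_N) (q : list R) : R :=
  coord_sum (fun i => mono_eval q (expo i)) c.

Definition coefs_integral (c : 'rV[R]_N) : R :=
  coord_sum (fun i => mono_integral n (expo i)) c.

Lemma coefs_eval_continuous q : continuous (fun c : 'rV[R]_N => coefs_eval c q).
Proof. exact: coord_sum_continuous. Qed.

Lemma coefs_integral_continuous : continuous coefs_integral.
Proof. exact: coord_sum_continuous. Qed.

Definition poly_of_coefs (c : 'rV[R]_N) : list (R * list nat) :=
  [seq (c ord0 i, expo i) | i <- index_enum 'I_N].

Lemma poly_eval_of_coefs c q : poly_eval (poly_of_coefs c) q = coefs_eval c q.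
Proof. exact: poly_eval_map. Qed.

Lemma poly_integral_of_coefs c : poly_integral n (poly_of_coefs c) = coefs_integral c.
Proof. exact: poly_integral_map. Qed.

Lemma BoxInt_coefs_integral c : BoxInt n (coefs_eval c) (coefs_integral c).
Proof.
rewrite -poly_integral_of_coefs; apply: BoxInt_ext (BoxInt_poly_integral n _) => q.
exact: poly_eval_of_coefs.
Qed.

Lemma exponent_index_eq (i j : 'I_N) : (expo i == expo j) = (i == j).
Proof. by rewrite nth_uniq ?exponents_uniq. Qed.

Lemma exponents_nth a : a \in exponents n d -> exists j : 'I_N, a = expo j.
Proof.
move=> Ha; have Hi : (index a (exponents n d) < N)%N by rewrite index_mem.
by exists (Ordinal Hi); rewrite nth_index.
Qed.

Lemma coefs_eval_is_poly c : is_poly_deg n d (coefs_eval c).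
Proof.
exists (poly_of_coefs c); split=> [|q _]; last by rewrite poly_eval_of_coefs.
apply/Forall_forall => _ /In_mem /mapP[i _ ->] /=.
by case/exponentsP: (mem_nth [::] (ltn_ord i)) => Hs /ssrnat.leP.
Qed.


Lemma coefs_eval_surj f : is_poly_deg n d f ->
  exists c, forall q, length q = n -> f q = coefs_eval c q.
Proof.
move=> [P [HP Hf]].
exists (\row_(i < N) \sum_(p <- P) if p.2 == expo i then p.1 else 0) => q Hq.
rewrite Hf // -{1}[P]map_id poly_eval_map /coefs_eval /coord_sum.
under [RHS]eq_bigr => i _ do rewrite mxE big_distrl /=.
rewrite exchange_big /=; apply: eq_big_seq => p /In_mem Hp.
have /Forall_forall/(_ p Hp) [Hs /ssrnat.leP Hsum] := HP.
have [j ->] : exists j : 'I_N, p.2 = expo j by apply/exponents_nth/exponentsP.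
rewrite (bigD1 j) //= eqxx big1 ?addr0 // => i Hij.
by rewrite exponent_index_eq eq_sym (negbTE Hij) mul0r.
Qed.

Lemma coefs_eval_eq0 u : (forall q, in_cube n q -> coefs_eval u q = 0) -> u = 0.
Proof.
move=> Hu; pose cf a := \sum_(i < N | expo i == a) u ord0 i.
have cfE (j : 'I_N) : cf (expo j) = u ord0 j.
  by rewrite /cf (eq_bigl (pred1 j)) ?big_pred1_eq // => i; exact: exponent_index_eq.
have Hcf q : coef_eval n d cf q = coefs_eval u q.
  by rewrite /coef_eval (big_nth [::]) big_mkord; apply: eq_bigr => j _; rewrite cfE.
apply/rowP => j; rewrite mxE -cfE.
by apply: coef_eval_eq0 (mem_nth _ (ltn_ord j)) => q Hq; rewrite Hcf Hu.
Qed.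

Lemma coefs_integral_gt0 u q0 : in_cube n q0 ->
  (forall q, in_cube n q -> 0 <= coefs_eval u q) -> coefs_eval u q0 != 0 ->
  0 < coefs_integral u.
Proof.
move=> Hq0 Hu Hu0; rewrite -poly_integral_of_coefs; apply/RltP.
apply: (poly_integral_gt0 _ _ _ Hq0) => [q Hq|]; rewrite poly_eval_of_coefs.
  exact/RleP/Hu.
by apply/RltP; rewrite lt_neqAle eq_sym Hu0 Hu.
Qed.

End CoefficientSpace.

(** * Roots of p *)

Lemma monic_root_norm_le (C : numFieldType) (m : nat) (a : 'I_m -> C) (z : C) :
  z ^+ m = \sum_(i < m) a i * z ^+ i -> `|z| <= 1 + \sum_(i < m) `|a i|.
Proof.
move=> Ez; have suma_ge0 : 0 <= \sum_(i < m) `|a i| by rewrite sumr_ge0.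
have [z_le1|z_gt1] := real_leP (normr_real z) (@real1 C).
  by rewrite (le_trans z_le1) ?lerDl.
have z_gt0 : 0 < `|z| by rewrite (lt_trans ltr01).
case: m a Ez suma_ge0 => [|m] a Ez _.
  by move: Ez; rewrite expr0 big_ord0 => /eqP; rewrite oner_eq0.
have : `|z| ^+ m.+1 <= (\sum_(i < m.+1) `|a i|) * `|z| ^+ m.
  rewrite -normrX Ez (le_trans (ler_norm_sum _ _ _)) // mulr_suml ler_sum // => i _.
  by rewrite normrM normrX ler_wpM2l // ler_weXn2l 1?ltW // -ltnS.
by rewrite exprS ler_pM2r ?exprn_gt0 // => /le_trans; apply; rewrite lerDr.
Qed.

Local Open Scope complex_scope.

Definition p_complex (m : nat) (pk : nat -> list R -> R) (q : list R) (z : R[i]) : R[i] :=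
  \sum_(j < m.+1) (pk j q)%:C * z ^+ j.

Lemma cpow_complex (z : R[i]) k :
  cpow (complex.Re z, complex.Im z) k = (complex.Re (z ^+ k), complex.Im (z ^+ k)).
Proof. by elim: k => [|k IH] //=; rewrite IH exprS; case: z {IH} => a b; case: (_ ^+ k). Qed.

Lemma psum_complex pk q (z : R[i]) k :
  psum pk q (complex.Re z, complex.Im z) k =
  (complex.Re (p_complex k pk q z), complex.Im (p_complex k pk q z)).
Proof.
rewrite /p_complex; elim: k => [|k IH].
  by rewrite big_ord1 /= RmultE mulr1 mulr0 subr0 mul0r addr0.
set zz := (complex.Re z, complex.Im z).
have -> : psum pk q zz k.+1 = ((psum pk q zz k).1 + pk k.+1 q * (cpow zz k.+1).1,
                               (psum pk q zz k).2 + pk k.+1 q * (cpow zz k.+1).2)%R by [].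
rewrite IH cpow_complex [in RHS]big_ord_recr /=.
by case: (z ^+ k.+1) => a b; case: (\sum_(_ < _) _) => u v /=; rewrite !mul0r subr0 addr0.
Qed.

Lemma inZ_complex n m pk q x y :
  inZ n m pk q x y <-> in_cube n q /\ p_complex m pk q (x +i* y) = 0.
Proof.
rewrite /inZ /p_Re /p_Im (psum_complex pk q (x +i* y)) /=.
by case: (p_complex _ _ _ _) => a b; split=> [[Hq [/= -> ->]]|[Hq [-> ->]]].
Qed.

Lemma p_complex_monic_eq0 m pk q z : pk m q = 1 ->
  p_complex m pk q z = 0 <-> z ^+ m = \sum_(j < m) - (pk j q)%:C * z ^+ j.
Proof.
move=> Hmon; rewrite /p_complex big_ord_recr /= Hmon mul1r.
under [X in _ <-> _ = X]eq_bigr do rewrite mulNr.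
rewrite sumrN; split=> [/eqP|->]; last exact: addrN.
by rewrite addrC addr_eq0 => /eqP.
Qed.

Lemma inZ_exists n m pk q : (0 < m)%N -> pk m q = 1 -> in_cube n q ->
  exists x y, inZ n m pk q x y.
Proof.
move=> m0 Hmon Hq; have [z Hz] := @solve_monicpoly R[i] m (fun j => - (pk j q)%:C) m0.
exists (complex.Re z), (complex.Im z); apply/inZ_complex; split=> //.
by apply/(p_complex_monic_eq0 _ Hmon); case: z Hz.
Qed.

Lemma norm_real_complex (r : R) : `|r%:C| = `|r|%:C.
Proof. by rewrite normc_def /= expr0n addr0 sqrtr_sqr. Qed.

Lemma inZ_bounded n m pk : (forall k, (k <= m)%coq_nat -> is_poly n (pk k)) ->
  (forall q, length q = n -> pk m q = 1) ->
  exists B, forall q x y, inZ n m pk q x y -> `|x| <= B.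
Proof.
move=> Hpk Hmonic.
have [M HM] := uniformly_bounded_on_cube n pk m
  (fun k Hk => is_poly_bounded_on_cube n (pk k) (Hpk k Hk)).
exists (1 + m%:R * M)%R => q x y /inZ_complex [Hq Hz].
have := monic_root_norm_le (proj1 (p_complex_monic_eq0 _ (Hmonic q (proj1 Hq))) Hz).
under eq_bigr do rewrite normrN norm_real_complex.
rewrite -rmorph_sum -(rmorph1 (real_complex R)) -rmorphD.
move=> /(le_trans (normc_ge_Re _)); rewrite lecR /= => Hx.
apply: le_trans Hx _; rewrite lerD2l -[m in X in _ <= X]card_ord -sum1_card natr_sum mulr_suml.
by apply: ler_sum => j _; rewrite mul1r -RabsE; apply/RleP/HM => //; apply/ssrnat.leP/ltnW.
Qed.

Close Scope complex_scope.

(** * Compactness *)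

Local Open Scope classical_set_scope.

Lemma bounded_set_norm_le (K : realType) N (A : set 'rV[K]_N) (M : K) :
  (forall x, A x -> `|x| <= M) -> bounded_set A.
Proof.
move=> HM; rewrite /bounded_set /bounded_near.
near=> M' => x Ax /=; apply: le_trans (HM x Ax) _.
by near: M'; apply: nbhs_pinfty_ge; exact: num_real.
Unshelve. all: by end_near.
Qed.

Lemma closed_min_of_bounded_sublevel (K : realType) N (F : set 'rV[K]_N)
    (f : 'rV[K]_N -> K) c0 :
  closed F -> continuous f -> F c0 -> bounded_set [set c | F c /\ f c <= f c0] ->
  exists2 cs, F cs & forall c, F c -> f cs <= f c.
Proof.
move=> cF cf Fc0 bS.
have cS : compact (F `&` f @^-1` [set t | t <= f c0]).
  apply: bounded_closed_compact => //; apply: closedI => //.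
  by apply: (proj1 (continuous_closedP _) cf); exact: closed_le.
have [cs /[!inE] -[Fcs fcs] Hmin] :=
  compact_EVT_min (ex_intro _ c0 (conj Fc0 (lexx _))) cS (continuous_subspaceT cf).
exists cs => // c Fc; have [fc|/ltW fc] := leP (f c) (f c0).
  by apply: Hmin; rewrite inE.
exact: le_trans fcs fc.
Qed.

Section Coercivity.
Variables n d : nat.
Local Notation N := (size (exponents n d)).

Definition nonneg_on_cube (c : 'rV[R]_N) : Prop :=
  forall q, in_cube n q -> 0 <= coefs_eval c q.

Lemma closed_coefs_eval_lb (T : Type) (D : set T) (lb : T -> R) (pt : T -> list R) :
  closed [set c : 'rV[R]_N | forall z, D z -> lb z <= coefs_eval c (pt z)].
Proof.
have -> : [set c : 'rV[R]_N | forall z, D z -> lb z <= coefs_eval c (pt z)] =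
    \bigcap_(z in D) ((fun c : 'rV[R]_N => coefs_eval c (pt z)) @^-1` [set t | lb z <= t]).
  by apply/seteqP; split=> c /= H z; apply: H.
apply: closed_bigI => z _.
by apply: (proj1 (continuous_closedP _) (@coefs_eval_continuous n d (pt z))); exact: closed_ge.
Qed.

(* The integral has a positive minimum on the compact set of nonnegative unit vectors,
   since such a vector is nonzero somewhere on the cube. *)
Lemma coefs_integral_coercive : exists2 del : R, 0 < del &
  forall w, nonneg_on_cube w -> `|w| * del <= coefs_integral w.
Proof.
pose S := [set u : 'rV[R]_N | `|u| = 1 /\ nonneg_on_cube u].
have normalize w : w != 0 -> nonneg_on_cube w -> S (`|w|^-1 *: w).
  move=> w0 Hw; split; first by rewrite normrZ normfV normr_id mulVf // normr_eq0.
  by move=> q Hq; rewrite /coefs_eval coord_sumZ mulr_ge0 ?invr_ge0 ?Hw.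
suff [del del0 Hdel] : exists2 del : R, 0 < del & forall u, S u -> del <= coefs_integral u.
  exists del => // w Hw; have [->|w0] := eqVneq w 0.
    by rewrite normr0 mul0r /coefs_integral coord_sum0.
  have := Hdel _ (normalize w w0 Hw); rewrite /coefs_integral coord_sumZ.
  by rewrite -ler_pdivlMl ?normr_gt0 // mulrC.
have [[u0 Su0]|S0] := pselect (S !=set0); last first.
  by exists 1 => // u Su; exfalso; apply: S0; exists u.
have cS : compact S.
  apply: bounded_closed_compact; first by apply: (@bounded_set_norm_le _ _ _ 1) => x [-> _].
  have -> : S = (Num.norm @^-1` [set t : R | t = 1]) `&`
                [set c | forall q, in_cube n q -> (fun _ => 0) q <= coefs_eval c (id q)] by [].
  apply: closedI; last exact: closed_coefs_eval_lb.
  by apply: (proj1 (continuous_closedP _) (@norm_continuous _ _)); exact: closed_eq.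
have [u /[!inE] -[u1 Hu] Hmin] := compact_EVT_min (ex_intro _ u0 Su0) cS
  (continuous_subspaceT (@coefs_integral_continuous n d)).
have : u != 0 by rewrite -normr_eq0 u1 oner_eq0.
move/eqP/(contra_not (@coefs_eval_eq0 n d u))/existsNP => [q0 /not_implyP [Hq0 /eqP Hu0]].
exists (coefs_integral u) => [|v Sv]; first exact: coefs_integral_gt0 Hq0 Hu Hu0.
exact: Hmin _ (mem_set Sv).
Qed.

Lemma sublevel_bounded_of_lower_bound (F : set 'rV[R]_N) (B r : R) :
  (forall c, F c -> forall q, in_cube n q -> - B <= coefs_eval c q) ->
  bounded_set [set c | F c /\ coefs_integral c <= r].
Proof.
move=> HF; have [c0 Hc0] := coefs_eval_surj (is_poly_deg_const n d B).
have [del del0 Hdel] := coefs_integral_coercive.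
apply: (@bounded_set_norm_le _ _ _ ((r + coefs_integral c0) / del + `|c0|)) => c [Fc Hr].
have Hw : nonneg_on_cube (c + c0).
  move=> q Hq; rewrite /coefs_eval coord_sumD -/(coefs_eval c q) -/(coefs_eval c0 q).
  by rewrite -Hc0; [have := HF c Fc q Hq; lra | case: Hq].
have := Hdel _ Hw; rewrite /coefs_integral coord_sumD -!/(coefs_integral _) => Hcoer.
have : `|c + c0| <= (r + coefs_integral c0) / del by rewrite ler_pdivlMr //; lra.
by have := ler_normB (c + c0) c0; rewrite addrK; lra.
Qed.

End Coercivity.

Definition feasible_coefs n m pk d : set 'rV[R]_(size (exponents n d)) :=
  [set c | forall z : list R * R * R, inZ n m pk z.1.1 z.1.2 z.2 -> z.1.2 <= coefs_eval c z.1.1].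

Arguments feasible_coefs : clear implicits.

Close Scope classical_set_scope.
Close Scope ring_scope.
Open Scope R_scope.

Lemma feasible_coefsP n m pk d c (f : list R -> R) :
  (forall q, length q = n -> f q = coefs_eval c q) ->
  (forall q x y, inZ n m pk q x y -> f q - x >= 0) <-> feasible_coefs n m pk d c.
Proof.
move=> Hf; split=> [Hfx [[q x] y] /= Hz|Fc q x y Hz].
  by have /Rge_le/RleP := Hfx q x y Hz; rewrite Hf ?RminusE ?subr_ge0 //; case: Hz => -[].
by apply/Rle_ge/RleP; rewrite Hf ?RminusE ?subr_ge0; [exact: Fc (q, x, y) Hz | case: Hz => -[]].
Qed.

Theorem mainTheorem3 (n m : nat) (pk : nat -> list R -> R)
  (Hn : (1 <= n)%coq_nat) (Hm : (1 <= m)%coq_nat)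
  (Hpk : forall k, (k <= m)%coq_nat -> is_poly n (pk k))
  (Hmonic : forall q, length q = n -> pk m q = 1)
  (d : nat) :
  exists vstar : list R -> R,
    feasible n m pk d vstar /\
    exists I : R, BoxInt n vstar I /\
      forall (w : list R -> R) (J : R),
        feasible n m pk d w -> BoxInt n w J -> I <= J.
Proof.
Local Open Scope ring_scope.
have [B HB] := inZ_bounded Hpk Hmonic.
have m_gt0 : (0 < m)%N by apply/ssrnat.leP.
have Hlow c : feasible_coefs n m pk d c -> forall q, in_cube n q -> - B <= coefs_eval c q.
  move=> Fc q Hq; have [x [y Hz]] := inZ_exists m_gt0 (Hmonic q (proj1 Hq)) Hq.
  by apply: le_trans (Fc (q, x, y) Hz); have := HB q x y Hz; rewrite ler_norml => /andP[].
have [c0 Hc0] := coefs_eval_surj (is_poly_deg_const n d B).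
have Fc0 : feasible_coefs n m pk d c0.
  move=> [[q x] y] /= Hz; rewrite -Hc0; last by case: Hz => -[].
  exact: le_trans (ler_norm x) (HB q x y Hz).
have cF : closed (feasible_coefs n m pk d) by apply: closed_coefs_eval_lb.
have [cs Fcs Hmin] := closed_min_of_bounded_sublevel cF
  (@coefs_integral_continuous n d) Fc0 (sublevel_bounded_of_lower_bound _ Hlow).
exists (coefs_eval cs); split.
  split; first exact: coefs_eval_is_poly.
  by apply/(@feasible_coefsP n m pk d cs (coefs_eval cs) (fun _ _ => erefl)).
exists (coefs_integral cs); split=> [|w J [Hwp Hwc] HJ]; first exact: BoxInt_coefs_integral.
have [c Hc] := coefs_eval_surj Hwp.
rewrite (BoxInt_unique _ _ _ _ _ Hc HJ (BoxInt_coefs_integral c)).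
by apply/RleP/Hmin/(@feasible_coefsP n m pk d c w Hc).
Qed.
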